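(* Let $G=(V,E)$ be a graph with no isolated vertices and maximum degree $\Delta$, and let $m\ge1$ be an integer. The greedy algorithm applied to $U=V$ and the function $f(A)=\sum_{v\in V}m_A(v)$ returns a fault-tolerant total dominating set $S$ (with parameter $m$) satisfying $|S|\le\big(1+\ln(\Delta+m-1)\big)\cdot|S^*|$, where $S^*$ is a minimum-cardinality fault-tolerant total dominating set of $G$.
   Context: $N(v)$ is the neighborhood of $v$, $N_C(v)=N(v)\cap C$. $m_A(v)=m$ if [$v\notin A$ and $|N_A(v)|\ge m$] or [$v\in A$ and $|N_A(v)|>0$]; $m_A(v)=m-1$ if $v\in A$ and $|N_A(v)|=0$; $m_A(v)=|N_A(v)|$ otherwise. $\Delta_x f(A)=f(A\cup\{x\})-f(A)$. The greedy algorithm: start with $S=\emptyset$; while some $u\in U\setminus S$ has $\Delta_u f(S)>0$, pick $x\in U\setminus S$ maximizing $\Delta_u f(S)$ (ties arbitrary) and add it to $S$; return $S$. A fault-tolerant total dominating set with parameter $m$ is a set $S\subseteq V$ such that every $v\in V\setminus S$ has at least $m$ neighbors in $S$ and every $v\in S$ has at least one neighbor in $S$. *)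

From mathcomp Require Import all_boot all_order all_algebra.
From Stdlib Require Import Reals.
Set Implicit Arguments. Unset Strict Implicit. Unset Printing Implicit Defensive.
Import GRing.Theory Num.Theory.

Section Defs.
Variables (V : finType) (e : rel V) (m : nat).

Definition nbhd (v : V) : {set V} := [set w | e v w].
Definition nbhd_in (A : {set V}) (v : V) : {set V} := nbhd v :&: A.

Definition deg (v : V) : nat := #|nbhd v|.
Definition max_degree : nat := (\max_(v : V) deg v)%N.

Definition no_isolated : Prop := forall v : V, (0 < deg v)%N.

Definition mA (A : {set V}) (v : V) : nat :=
  if ((v \notin A) && (m <= #|nbhd_in A v|)%N) || ((v \in A) && (0 < #|nbhd_in A v|)%N)
  then m
  else if (v \in A) && (#|nbhd_in A v| == 0%N) then m.-1
  else #|nbhd_in A v|.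

Definition fval (A : {set V}) : nat := (\sum_(v : V) mA A v)%N.

Definition gain (A : {set V}) (x : V) : int :=
  GRing.add (Posz (fval (x |: A))) (GRing.opp (Posz (fval A))).

Definition has_positive_gain (S : {set V}) : Prop :=
  exists u, u \notin S /\ Order.lt (0 : int) (gain S u).

Definition greedy_step (S S' : {set V}) : Prop :=
  has_positive_gain S /\
  exists x, [/\ x \notin S,
                (forall u, u \notin S -> Order.le (gain S u) (gain S x))
              & S' = x |: S].

Inductive greedy_reach : {set V} -> Prop :=
  | greedy_start : greedy_reach set0
  | greedy_next S S' : greedy_reach S -> greedy_step S S' -> greedy_reach S'.

(* S is a possible return value of the greedy algorithm
   (some run with some tie-breaking reaches S and the loop stops) *)
Definition greedy_output (S : {set V}) : Prop :=
  greedy_reach S /\ ~ has_positive_gain S.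

Definition ftds (S : {set V}) : Prop :=
  (forall v, v \notin S -> (m <= #|nbhd_in S v|)%N) /\
  (forall v, v \in S -> (0 < #|nbhd_in S v|)%N).

Definition min_ftds (S : {set V}) : Prop :=
  ftds S /\ forall T, ftds T -> (#|S| <= #|T|)%N.

End Defs.

(* m_A(v) is the truncation at m of the coverage of v, to which every vertex
   of A contributes once for each of its neighbours and m - 1 times for itself.
   Truncated sums of nonnegative weights make f monotone and submodular, and f
   reaches its maximum m|V| exactly on the fault-tolerant total dominating
   sets.  By submodularity the gap m|V| - f(S) is at most |S*| times the best
   marginal gain, so each greedy step shrinks the gap by a factor 1 - 1/|S*|,
   starting from at most |S*|(Δ + m - 1), since no single vertex gains more
   than Δ + m - 1.  After t > |S*| ln(Δ + m - 1) steps the gap is below |S*|,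
   and as every step lowers it by at least one, fewer than |S*| steps follow. *)

From mathcomp Require Import all_boot all_order all_algebra zify.
From Stdlib Require Import Reals Lra ZArith.
Import ssrnat.

Set Implicit Arguments. Unset Strict Implicit. Unset Printing Implicit Defensive.

Lemma sum_nat_eq_in (T : finType) (A : {pred T}) (v : T) :
  \sum_(u in A) ((u == v) : nat) = (v \in A).
Proof.
case vA: (v \in A); last by rewrite big1 // => u uA; case: eqP => // uv; rewrite -uv uA in vA.
by rewrite (bigD1 v) //= eqxx big1 // => u /andP [_ /negbTE ->].
Qed.

Section GreedyFtds.
Variables (V : finType) (e : rel V) (m : nat).
Hypothesis m_gt0 : 0 < m.

Definition cover_weight (u v : V) : nat := e v u + m.-1 * (u == v).

Definition coverage (A : {set V}) (v : V) : nat := \sum_(u in A) cover_weight u v.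

Lemma card_nbhd_in (A : {set V}) v : #|nbhd_in e A v| = \sum_(u in A) (e v u : nat).
Proof.
rewrite -sum1_card big_mkcond [RHS]big_mkcond /=.
by apply: eq_bigr => u _; rewrite !inE; case: (e v u); case: (u \in A).
Qed.

Lemma coverageE (A : {set V}) v : coverage A v = #|nbhd_in e A v| + m.-1 * (v \in A).
Proof. by rewrite /coverage big_split /= -big_distrr /= card_nbhd_in sum_nat_eq_in. Qed.

Lemma mA_minn (A : {set V}) v : mA e m A v = minn (coverage A v) m.
Proof.
rewrite coverageE /mA; set n := #|nbhd_in e A v|.
case: (v \in A); case: (ltnP 0 n) => n0; case: (leqP m n) => nm /=;
  rewrite ?muln1 ?muln0 ?addn0 ?eqn0Ngt ?n0 ?nm /=; try lia.
by rewrite -leqNgt n0; lia.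
Qed.

Lemma fvalE (A : {set V}) : fval e m A = \sum_v minn (coverage A v) m.
Proof. by apply: eq_bigr => v _; rewrite mA_minn. Qed.

Lemma coverage_setU1 (A : {set V}) y v : y \notin A ->
  coverage (y |: A) v = cover_weight y v + coverage A v.
Proof. exact: big_setU1. Qed.

Lemma coverage_subset (A B : {set V}) v : A \subset B -> coverage A v <= coverage B v.
Proof.
by move=> sAB; rewrite /coverage [X in _ <= X](big_setID A) /= (setIidPr sAB) leq_addr.
Qed.

Lemma fval_subset (A B : {set V}) : A \subset B -> fval e m A <= fval e m B.
Proof.
move=> sAB; rewrite !fvalE; apply: leq_sum => v _.
by rewrite leq_min geq_minr andbT (leq_trans (geq_minl _ _)) ?coverage_subset.
Qed.

Lemma fval_setU1_submod (A B : {set V}) y : A \subset B ->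
  fval e m (y |: B) + fval e m A <= fval e m (y |: A) + fval e m B.
Proof.
move=> sAB; case yB: (y \in B).
  by rewrite (setUidPr _) ?sub1set // addnC leq_add2r fval_subset ?subsetU1.
have yA : y \notin A by apply: contraFN yB; apply: (subsetP sAB).
rewrite !fvalE -!big_split /=; apply: leq_sum => v _.
rewrite !coverage_setU1 ?yB //.
have := coverage_subset v sAB; lia.
Qed.

Lemma fval_set0 : fval e m set0 = 0.
Proof. by rewrite fvalE big1 // => v _; rewrite /coverage big_set0 min0n. Qed.

Definition fmax : nat := #|V| * m.

Lemma fval_le_fmax (A : {set V}) : fval e m A <= fmax.
Proof. by rewrite fvalE /fmax -sum_nat_const; apply: leq_sum => v _; apply: geq_minr. Qed.

Lemma ftds_fmaxP (A : {set V}) : ftds e m A <-> fval e m A = fmax.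
Proof.
rewrite fvalE /fmax -sum_nat_const; split.
  by move=> [outA inA]; apply: eq_bigr => v _; rewrite coverageE;
     case: (boolP (v \in A)) => [/inA | /outA]; lia.
move=> fullA; have [_] := leqif_sum (fun v (_ : true) => leqif_eq (geq_minr (coverage A v) m)).
rewrite fullA eqxx => /esym/forallP full.
by split=> v vA; have /eqP := full v; rewrite coverageE ?(negbTE vA) ?vA; lia.
Qed.

Definition delta (S : {set V}) (u : V) : nat := fval e m (u |: S) - fval e m S.

Lemma gainE (S : {set V}) u : gain e m S u = delta S u.
Proof. by rewrite /gain /delta subzn // fval_subset // subsetUr. Qed.

Lemma fval_setU_seq_le (S : {set V}) (s : seq V) :
  fval e m (S :|: [set:: s]) <= fval e m S + \sum_(y <- s) delta S y.
Proof.
elim: s => [|y s IH]; first by rewrite set_nil setU0 big_nil addn0.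
rewrite set_cons big_cons setUCA.
have := fval_setU1_submod y (subsetUl S [set:: s]).
have := fval_subset (subsetUr [set y] S).
move: IH; rewrite /delta; lia.
Qed.

Lemma fval_setU_le (S T : {set V}) :
  fval e m (S :|: T) <= fval e m S + \sum_(y in T) delta S y.
Proof. by have := fval_setU_seq_le S (enum T); rewrite set_enum big_enum. Qed.

Lemma fmax_le_fval_add (S T : {set V}) d : ftds e m T ->
  (forall u, u \notin S -> delta S u <= d) -> fmax <= fval e m S + #|T| * d.
Proof.
move=> /ftds_fmaxP fT small_delta.
have := fval_setU_le S T; have := fval_subset (subsetUr S T).
have : \sum_(y in T) delta S y <= #|T| * d.
  rewrite -sum_nat_const; apply: leq_sum => y _.
  by case: (boolP (y \in S)) => [yS | /small_delta //]; rewrite /delta (setUidPr _) ?sub1set ?subnn.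
lia.
Qed.

Lemma delta_set0_le y : symmetric e -> delta set0 y <= max_degree e + m - 1.
Proof.
move=> e_sym; rewrite /delta fval_set0 subn0 fvalE.
have deg_y : \sum_v (e v y : nat) = deg e y.
  by rewrite /deg -sum1_card [RHS]big_mkcond /=; apply: eq_bigr => v _; rewrite inE e_sym.
have : \sum_v cover_weight y v = deg e y + m.-1.
  rewrite big_split /= -big_distrr /= deg_y (bigD1 y) //= eqxx big1 ?addn0 ?muln1 //.
  by move=> v /negbTE; rewrite eq_sym => ->.
have : \sum_v minn (coverage (y |: set0) v) m <= \sum_v cover_weight y v.
  by apply: leq_sum => v _; rewrite coverage_setU1 ?inE // /coverage big_set0 addn0 geq_minl.
have := @leq_bigmax _ (deg e) y; rewrite -/(max_degree e); lia.
Qed.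

Lemma fmax_le_ftds_card T : symmetric e -> ftds e m T ->
  fmax <= #|T| * (max_degree e + m - 1).
Proof.
move=> e_sym fT; have := fmax_le_fval_add (S := set0) fT (fun u _ => delta_set0_le u e_sym).
by rewrite fval_set0.
Qed.

Lemma greedy_stepP (S S' : {set V}) : greedy_step e m S S' ->
  exists x, [/\ x \notin S, S' = x |: S, 0 < delta S x &
                forall u, u \notin S -> delta S u <= delta S x].
Proof.
move=> [[u [uS gain_u]] [x [xS x_max ->]]]; exists x; split=> //.
  by have := x_max u uS; move: gain_u; rewrite !gainE ltz_nat lez_nat; lia.
by move=> w wS; have := x_max w wS; rewrite !gainE lez_nat.
Qed.

Lemma greedy_step_residual (T S S' : {set V}) : ftds e m T -> greedy_step e m S S' ->
  fmax - fval e m S' < fmax - fval e m S /\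
  (fmax - fval e m S') * #|T| <= (fmax - fval e m S) * (#|T| - 1).
Proof.
move=> fT /greedy_stepP [x [xS -> delta_gt0 x_max]].
have gap := fmax_le_fval_add fT x_max.
have := fval_le_fmax (x |: S); have := fval_subset (subsetUr [set x] S).
move: gap delta_gt0; rewrite /delta; set d := _ - fval e m S.
set a := fmax - fval e m S; set a' := fmax - fval e m (x |: S) => gap d_gt0 mono le_fmax.
have a_eq : a = a' + d by rewrite /a /a' /d; lia.
have a_le : a <= #|T| * d by rewrite /a; lia.
split; first lia.
case: #|T| a_le => [|s]; first lia.
by rewrite a_eq subSS subn0 mulnS mulnDl mulSn [d * s]mulnC; lia.
Qed.

Lemma greedy_reach_residuals (T S : {set V}) : ftds e m T -> greedy_reach e m S ->
  exists r : nat -> nat, [/\ r 0 = fmax, r #|S| = fmax - fval e m S,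
    forall i, i < #|S| -> r i.+1 < r i &
    forall i, i < #|S| -> r i.+1 * #|T| <= r i * (#|T| - 1)].
Proof.
move=> fT; elim=> [|S0 S1 _ [r [r0 rS0 r_decr r_geom]] step].
  by exists (fun=> fmax); rewrite fval_set0 subn0 cards0.
have [step_decr step_geom] := greedy_step_residual fT step.
have [x [xS0 S1_eq _ _]] := greedy_stepP step.
rewrite S1_eq cardsU1 xS0 add1n -S1_eq.
exists (fun i => if i == #|S0|.+1 then fmax - fval e m S1 else r i).
split=> [//|/=|i|i]; rewrite ?eqxx // ltnS eqSS leq_eqVlt => /predU1P [-> | lt_i].
- by rewrite eqxx ltn_eqF // rS0.
- by rewrite (ltn_eqF lt_i) (ltn_eqF (leqW lt_i)); apply: r_decr.
- by rewrite eqxx ltn_eqF // rS0.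
- by rewrite (ltn_eqF lt_i) (ltn_eqF (leqW lt_i)); apply: r_geom.
Qed.

Lemma no_positive_gain_ftds (S : {set V}) : no_isolated e ->
  ~ has_positive_gain e m S -> ftds e m S.
Proof.
move=> e_noiso no_gain.
have fV : ftds e m [set: V].
  by split=> v; rewrite inE // => _; rewrite /nbhd_in setIT; apply: e_noiso.
apply/ftds_fmaxP/eqP; rewrite eqn_leq fval_le_fmax /=.
have := fmax_le_fval_add (S := S) (d := 0) fV; rewrite muln0 addn0; apply=> u uS.
rewrite leqn0; apply/negPn/negP => delta_u; apply: no_gain.
by exists u; rewrite gainE ltz_nat lt0n.
Qed.

Lemma greedy_stop_or_step (S : {set V}) :
  ~ has_positive_gain e m S \/ exists2 x, x \notin S & greedy_step e m S (x |: S).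
Proof.
have [S_full | [u uS]] := set_0Vmem (~: S).
  by left=> [[u [uS _]]]; move: uS; rewrite -in_setC S_full inE.
rewrite inE in uS; have [x xS x_max] := @arg_maxnP _ u (fun w => w \notin S) (delta S) uS.
have [delta0 | delta_pos] := posnP (delta S x).
  left=> [[w [wS]]]; rewrite gainE ltz_nat.
  by have := x_max w wS; rewrite /= delta0 leqn0 => /eqP ->.
right; exists x => //; split.
  by exists x; rewrite gainE ltz_nat.
by exists x; split=> // w wS; rewrite !gainE lez_nat; apply: x_max.
Qed.

Lemma greedy_output_exists : exists S, greedy_output e m S.
Proof.
suff run S : greedy_reach e m S -> exists S', greedy_output e m S'.
  by apply: run; constructor.
move: {2}#|~: S| (leqnn #|~: S|) => n; elim: n S => [|n IH] S S_n S_reach;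
  have [stop | [x xS step]] := greedy_stop_or_step S; try by exists S.
  by move: S_n; rewrite leqn0 cards_eq0 => /eqP S_full; move: xS; rewrite -in_setC S_full inE.
apply: (IH (x |: S)); last exact: greedy_next S_reach step.
by have := cardsC S; have := cardsC (x |: S); rewrite cardsU1 xS; lia.
Qed.

End GreedyFtds.

Section Residuals.
Variables (r : nat -> nat) (k : nat).

Lemma strict_decr_residual_ge : (forall i, i < k -> r i.+1 < r i) ->
  forall t, t <= k -> k - t <= r t.
Proof.
move=> r_decr t t_le; rewrite -{2}(subKn t_le).
elim: (k - t) (leq_subr t k) => [|d IH] d_lt //.
have := r_decr (k - d.+1); rewrite subnSK // => /(_ ltac:(lia)).
have := IH (ltnW d_lt); lia.
Qed.

Lemma geometric_residual_le s : (forall i, i < k -> r i.+1 * s <= r i * (s - 1)) ->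
  forall t, t <= k -> r t * s ^ t <= r 0 * (s - 1) ^ t.
Proof.
move=> r_geom; elim=> [|t IH] t_lt; first by rewrite !expn0.
rewrite !expnS !mulnA [r 0 * _ * _]mulnAC.
apply: leq_trans (leq_mul (r_geom t t_lt) (leqnn _)) _.
by rewrite mulnAC leq_mul // IH // ltnW.
Qed.

End Residuals.

Lemma INR_muln m n : INR (m * n) = (INR m * INR n)%R.
Proof. exact: mult_INR. Qed.

Lemma INR_expn m n : INR (m ^ n) = (INR m ^ n)%R.
Proof. by elim: n => [|n IH] //; rewrite expnS INR_muln IH. Qed.

Lemma INR_leq m n : m <= n -> (INR m <= INR n)%R.
Proof. by move/leP; apply: le_INR. Qed.

Section RealBounds.
Local Open Scope R_scope.

Lemma exp_pow (x : R) (n : nat) : exp x ^ n = exp (INR n * x).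
Proof.
elim: n => [|n IH]; first by rewrite Rmult_0_l exp_0.
by rewrite S_INR /= IH -exp_plus; congr exp; ring.
Qed.

Lemma exists_nat_between (x : R) : 0 <= x -> exists t : nat, x < INR t <= x + 1.
Proof.
move=> x_ge0; have [up_gt up_le] := archimed x.
have up_ge0 : (0 <= up x)%Z by apply/Z.lt_le_incl/lt_IZR; lra.
by exists (Z.to_nat (up x)); rewrite INR_IZR_INZ Z2Nat.id //; lra.
Qed.

Lemma pow_pred_lt (s D : R) (t : nat) : 1 <= s -> 0 < D -> s * ln D < INR t ->
  D * (s - 1) ^ t < s ^ t.
Proof.
move=> s_ge1 D_gt0 t_gt.
(* [1 + x <= exp x] at [x = - 1 / s] *)
have pred_le : s - 1 <= s * exp (- / s).
  have := exp_ineq1_le (- / s); have : s * / s = 1 by field; lra.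
  by nra.
have pow_le : (s - 1) ^ t <= s ^ t * exp (INR t * - / s).
  by rewrite -exp_pow -Rpow_mult_distr; apply: pow_incr; lra.
have decay : D * exp (INR t * - / s) < 1.
  have s_inv : 0 < / s by apply: Rinv_0_lt_compat; lra.
  have : ln D < INR t * / s.
    have : ln D = s * ln D * / s by field; lra.
    by move=> ->; apply: Rmult_lt_compat_r.
  move=> ln_lt; rewrite -(exp_ln D) // -exp_plus -exp_0.
  by apply: exp_increasing; lra.
have : 0 < s ^ t by apply: pow_lt; lra.
have : 0 <= exp (INR t * - / s) by apply/Rlt_le/exp_pos.
nra.
Qed.

Lemma steps_le_log_bound (r : nat -> nat) (s D k : nat) : (0 < D)%N ->
  (r 0 <= s * D)%N ->
  (forall i, i < k -> r i.+1 < r i)%N ->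
  (forall i, i < k -> r i.+1 * s <= r i * (s - 1))%N ->
  INR k <= (1 + ln (INR D)) * INR s.
Proof.
move=> D_gt0 r0_le r_decr r_geom.
have D_ge1 : 1 <= INR D by apply: (INR_leq D_gt0).
have lnD_ge0 : 0 <= ln (INR D).
  have [D_gt1 | <-] := Rle_lt_or_eq_dec _ _ D_ge1; last by rewrite ln_1; lra.
  by rewrite -ln_1; apply/Rlt_le/ln_increasing; lra.
have [s0 | s_gt0] := posnP s.
  have -> : k = 0%N.
    by case: k r_decr {r_geom} => // k /(_ 0%N isT); move: r0_le; rewrite s0; lia.
  by rewrite s0 /=; lra.
have s_ge1 : 1 <= INR s by apply: (INR_leq s_gt0).
have [t [t_gt t_le]] := exists_nat_between (Rmult_le_pos _ _ (pos_INR s) lnD_ge0).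
have [k_lt | t_le_k] := ltnP k t.
  by have := INR_leq k_lt; rewrite S_INR; lra.
have rt_lt : (r t < s)%N.
  have := leq_trans (geometric_residual_le r_geom t_le_k) (leq_mul r0_le (leqnn _)).
  move/INR_leq; rewrite !INR_muln !INR_expn minus_INR; last exact/leP.
  have := pow_pred_lt s_ge1 (lt_0_INR _ (ltP D_gt0)) t_gt.
  have : 0 < INR s ^ t by apply: pow_lt; lra.
  rewrite /= => pow_gt0 pred_lt bound; apply/ltP/INR_lt; nra.
have : (k.+1 <= t + s)%N by have := strict_decr_residual_ge r_decr t_le_k; lia.
by move/INR_leq; rewrite S_INR plus_INR; lra.
Qed.

End RealBounds.

Theorem mainTheorem10 (V : finType) (e : rel V) (m : nat) :
  symmetric e -> irreflexive e ->
  no_isolated e -> 1 <= m ->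
  (exists S, greedy_output e m S) /\
  forall S : {set V}, greedy_output e m S ->
    ftds e m S /\
    forall Sstar : {set V}, min_ftds e m Sstar ->
      (INR #|S| <= (1 + ln (INR (max_degree e + m - 1))) * INR #|Sstar|)%R.
Proof.
move=> e_sym _ e_noiso m_gt0; split; first exact: greedy_output_exists.
move=> S [S_reach no_gain]; split; first exact: no_positive_gain_ftds.
move=> Sstar [Sstar_ftds _].
have [V_empty | [v _]] := set_0Vmem [set: V].
  have card0 (A : {set V}) : #|A| = 0 by apply/eqP; rewrite cards_eq0 -subset0 -V_empty subsetT.
  by rewrite !card0 /= Rmult_0_r; apply: Rle_refl.
have D_gt0 : 0 < max_degree e + m - 1.
  by have := e_noiso v; have := @leq_bigmax _ (deg e) v; rewrite /max_degree; lia.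
have [r [r0 _ r_decr r_geom]] := greedy_reach_residuals m_gt0 Sstar_ftds S_reach.
apply: (steps_le_log_bound D_gt0 _ r_decr r_geom).
by rewrite r0; apply: fmax_le_ftds_card.
Qed.
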